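(* Let $R$ be a commutative ring such that the Picard group of its total ring of fractions $T(R)$ is trivial. Then every invertible $R$-module $M$ has avoidance: if $M=\bigcup_{k=1}^n M_k$ for finitely many $R$-submodules $M_k$ of $M$, then $M=M_k$ for some $k$.
   Context: All rings are commutative with $1\neq 0$. An $R$-module $M$ is invertible if there is an $R$-module $N$ with $M\otimes_R N\cong R$ (equivalently, $M$ is finitely generated projective of constant rank 1). An $R$-module $M$ has avoidance if whenever $M$ equals a finite union of $R$-submodules, it equals one of them. *)

From HB Require Import structures.
From mathcomp Require Import all_boot all_order all_algebra.
Set Implicit Arguments. Unset Strict Implicit. Unset Printing Implicit Defensive.
Import GRing.Theory.
Local Open Scope ring_scope.

Definition nonzerodivisor (R : comNzRingType) (s : R) : Prop :=
  forall a : R, s * a = 0 -> a = 0.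

(* (T, iota) is the total ring of fractions T(R) = S^{-1} R, S = non-zero-divisors,
   given by the standard characterization of the localization map:
   elements of S become units, ker iota = {a | exists s in S, s a = 0} (= 0),
   and every element of T is iota a / iota s with s in S. *)
Definition is_total_ring_of_fractions (R T : comNzRingType)
    (iota : {rmorphism R -> T}) : Prop :=
  [/\ (forall s : R, nonzerodivisor s -> exists u : T, iota s * u = 1),
      (forall a : R, iota a = 0 -> exists2 s : R, nonzerodivisor s & s * a = 0)
    & (forall t : T, exists a s : R, nonzerodivisor s /\ t * iota s = iota a)].

Definition bilinear_map (R : comNzRingType) (M N P : lmodType R)
    (phi : M -> N -> P) : Prop :=
  (forall (a : R) (m1 m2 : M) (n : N),
      phi (a *: m1 + m2) n = a *: phi m1 n + phi m2 n) /\
  (forall (a : R) (m : M) (n1 n2 : N),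
      phi m (a *: n1 + n2) = a *: phi m n1 + phi m n2).

Definition linear_map (R : comNzRingType) (M P : lmodType R) (h : M -> P) : Prop :=
  forall (a : R) (x y : M), h (a *: x + y) = a *: h x + h y.

Definition is_tensor_product (R : comNzRingType) (M N Q : lmodType R)
    (beta : M -> N -> Q) : Prop :=
  bilinear_map beta /\
  forall (P : lmodType R) (phi : M -> N -> P), bilinear_map phi ->
    (exists h : Q -> P, linear_map h /\ forall m n, phi m n = h (beta m n)) /\
    (forall h1 h2 : Q -> P, linear_map h1 -> linear_map h2 ->
       (forall m n, h1 (beta m n) = phi m n) ->
       (forall m n, h2 (beta m n) = phi m n) -> forall q, h1 q = h2 q).

(* M is invertible: there is N with M (x)_R N isomorphic to R,
   i.e. R itself (as the regular module R^o) is a tensor product of M and N. *)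
Definition invertible_module (R : comNzRingType) (M : lmodType R) : Prop :=
  exists (N : lmodType R) (beta : M -> N -> R^o), is_tensor_product beta.

Definition isomorphic_modules (R : comNzRingType) (M N : lmodType R) : Prop :=
  exists (f : M -> N) (g : N -> M),
    [/\ linear_map f, cancel f g & cancel g f].

Definition trivial_Picard_group (R : comNzRingType) : Prop :=
  forall M : lmodType R, invertible_module M -> isomorphic_modules M R^o.

Definition has_avoidance (R : comNzRingType) (M : lmodType R) : Prop :=
  forall (n : nat) (Mk : 'I_n -> {pred M}),
    (forall k, submod_closed (Mk k)) ->
    (forall x : M, exists k, x \in Mk k) ->
    exists k, forall x : M, x \in Mk k.

From HB Require Import structures.
From mathcomp Require Import all_boot all_order all_algebra.
From mathcomp Require Import boolp classical_sets.
From mathcomp Require Import ring.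
Set Implicit Arguments. Unset Strict Implicit. Unset Printing Implicit Defensive.
Import GRing.Theory.
Local Open Scope ring_scope.
Local Open Scope classical_set_scope.

(* Every invertible R-module M has avoidance.  Let beta : M x N -> R exhibit R as
   M (x) N, and suppose M is the union of proper submodules M_1, ..., M_n.
   - The conductor C_k = {r | r M <= M_k} is a proper ideal, so it lies in a
     maximal ideal m_k (Krull's lemma, via Zorn).
   - Since 1 is a sum of values of beta, the map n |-> beta(x, n) controls x:
     if x lies in a submodule S then beta(x, n) M <= S, i.e. beta(x, n) lies
     in the conductor of S.
   - A prime-avoidance style construction yields x in M such that, for every
     k, some beta(x, n) lies outside m_k.
   Such an x lies in no M_k, contradicting M = M_1 u ... u M_n. *)

Section Ideals.
Variable R : comNzRingType.

Definition ideal (I : set R) : Prop :=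
  [/\ I 0, (forall x y, I x -> I y -> I (x + y)) & (forall r x, I x -> I (r * x))].

Definition maximal_ideal (m : set R) : Prop :=
  [/\ ideal m, ~ m 1 & forall I, ideal I -> m `<=` I -> ~ I 1 -> I `<=` m].

Lemma idealB (I : set R) a b : ideal I -> I a -> I b -> I (a - b).
Proof. by case=> I0 ID IM Ia Ib; apply: ID => //; rewrite -mulN1r; apply: IM. Qed.

Lemma ideal_sum (I : set R) (J : Type) (s : seq J) (F : J -> R) :
  ideal I -> (forall j, I (F j)) -> I (\sum_(j <- s) F j).
Proof.
case=> I0 ID _ FI; elim: s => [|j s IH]; first by rewrite big_nil.
by rewrite big_cons; apply: ID.
Qed.

(* Adjoining the ideal C to a chain of sets X with X u C an ideal again gives
   an ideal: this is the chain condition in Krull's lemma. *)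
Lemma chain_union_ideal (C : set R) (F : set (set R)) :
  ideal C -> total_on F subset -> (forall X, F X -> ideal (X `|` C)) ->
  ideal (\bigcup_(X in F) X `|` C).
Proof.
move=> [C0 CD CM] Ftot FI.
have lift X x : F X -> (X `|` C) x -> (\bigcup_(X in F) X `|` C) x.
  by move=> FX [Xx|Cx]; [left; exists X | right].
split; first by right.
- move=> x y [[X FX Xx]|Cx] [[Y FY Yy]|Cy]; last by right; apply: CD.
  + have [XY|YX] := Ftot X Y FX FY.
    * by apply: (lift Y) => //; have [_ YD _] := FI Y FY; apply: YD; left => //; apply: XY.
    * by apply: (lift X) => //; have [_ XD _] := FI X FX; apply: XD; left => //; apply: YX.
  + by apply: (lift X) => //; have [_ XD _] := FI X FX; apply: XD; [left|right].
  + by apply: (lift Y) => //; have [_ YD _] := FI Y FY; apply: YD; [right|left].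
- move=> r x [[X FX Xx]|Cx]; last by right; apply: CM.
  by apply: (lift X) => //; have [_ _ XM] := FI X FX; apply: XM; left.
Qed.

Lemma maximal_ideal_exists (C : set R) :
  ideal C -> ~ C 1 -> exists2 m, maximal_ideal m & C `<=` m.
Proof.
move=> iC nC1.
pose P (A : set R) := ideal (A `|` C) /\ ~ (A `|` C) 1.
have [A [[iA nA1] Amax]] : exists A, P A /\ forall B, A `<` B -> ~ P B.
  apply: Zorn_bigcup => F FP Ftot; split.
    by apply: chain_union_ideal => // X /FP[].
  by case=> [[X /FP[_ nX1] X1]|//]; apply: nX1; left.
exists (A `|` C); last by move=> x Cx; right.
split=> // I iI AI nI1 x Ix; apply: contrapT => nAx.
apply: (Amax I).
- split; first by move=> y Ay; apply: AI; left.
  by move=> IA; apply: nAx; left; apply: IA.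
- have IC : C `<=` I by move=> y Cy; apply: AI; right.
  by rewrite /P ((setUidPl _ _).2 IC).
Qed.

Lemma maximal_ideal_prime (m : set R) a b :
  maximal_ideal m -> ~ m a -> ~ m b -> ~ m (a * b).
Proof.
move=> [[m0 mD mM] nm1 mmax].
(* Outside m, an element c is invertible modulo m: 1 = r c + y with y in m. *)
have inv_mod c : ~ m c -> exists r y, m y /\ 1 = r * c + y.
  move=> nc; apply: contrapT => ninv.
  pose J x := exists r y, m y /\ x = r * c + y.
  have iJ : ideal J.
    split.
    - by exists 0, 0; rewrite mul0r addr0.
    - move=> x y [r1 [y1 [m1 ->]]] [r2 [y2 [m2 ->]]].
      by exists (r1 + r2), (y1 + y2); split; [apply: mD | ring].
    - move=> s x [r [y [my ->]]]; exists (s * r), (s * y).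
      by split; [apply: mM | ring].
  apply: nc; apply: (mmax J iJ).
  - by move=> x mx; exists 0, x; rewrite mul0r add0r.
  - by case=> r [y [my e]]; apply: ninv; exists r, y.
  - by exists 1, 0; rewrite mul1r addr0.
move=> na nb mab.
have [r [y [my ea]]] := inv_mod a na.
have [s [z [mz eb]]] := inv_mod b nb.
apply: nm1.
have -> : (1 : R) = (r * s) * (a * b) + ((r * a) * z + y * (s * b + z)).
  by rewrite -[1]mulr1 {1}ea {1}eb; ring.
apply: (mD); first exact: (mM).
by apply: (mD); [apply: (mM) | rewrite mulrC; apply: (mM)].
Qed.

Lemma maximal_ideal_sub (m1 m2 : set R) :
  maximal_ideal m1 -> maximal_ideal m2 -> m1 `<=` m2 -> m2 `<=` m1.
Proof. by move=> [_ _ m1max] [m2_ideal m2_proper _] s12; apply: m1max. Qed.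

Lemma avoid_maximal_ideal (J : eqType) (s : seq J) (I : J -> set R) (m : set R) :
  maximal_ideal m -> {in s, forall j, ideal (I j) /\ exists2 u, I j u & ~ m u} ->
  exists2 e, ~ m e & {in s, forall j, I j e}.
Proof.
move=> mmax; elim: s => [|j s IH] Is.
  by exists 1 => //; case: mmax.
have [e ne eI] : exists2 e, ~ m e & {in s, forall i, I i e}.
  by apply: IH => i si; apply: Is; rewrite inE si orbT.
have [[_ _ IjM] [u Iju nu]] := Is j (mem_head j s).
exists (e * u); first exact: maximal_ideal_prime.
move=> i; rewrite inE => /predU1P[->|si]; first exact: IjM.
have /Is[[_ _ IiM] _] : i \in j :: s by rewrite inE si orbT.
by rewrite mulrC; apply: IiM; apply: eI.
Qed.

End Ideals.

Lemma linear_map_regular (R : comNzRingType) (P : lmodType R) (h : R^o -> P) :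
  linear_map h -> forall a : R, h a = a *: h 1.
Proof.
move=> hl a.
have h0 : h 0 = 0.
  have := hl 1 0 0; rewrite scaler0 addr0 scale1r => e.
  by apply: (addrI (h 0)); rewrite addr0 -e.
by have := hl a 1 0; rewrite addr0 h0 addr0 [a *: (1 : R^o)]/(GRing.scale _ _) /= mulr1.
Qed.

Section Tensor.
Variables (R : comNzRingType) (M N : lmodType R) (beta : M -> N -> R^o).

Definition beta_span : pred R^o := fun r =>
  `[< exists s : seq (R * M * N), r = \sum_(p <- s) p.1.1 * beta p.1.2 p.2 >].

Lemma beta_span_closed : subsemimod_closed beta_span.
Proof.
split; [split|].
- by apply/asboolP; exists [::]; rewrite big_nil.
- move=> u v /asboolP[s ->] /asboolP[t ->]; apply/asboolP; exists (s ++ t).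
  by rewrite big_cat.
- move=> a u /asboolP[s ->]; apply/asboolP.
  exists [seq (a * p.1.1, p.1.2, p.2) | p <- s].
  rewrite big_map /= [a *: _]/(GRing.scale _ _) /= mulr_sumr.
  by apply: eq_bigr => p _; rewrite mulrA.
Qed.

HB.instance Definition _ := GRing.isSubmodClosed.Build R R^o beta_span beta_span_closed.

Inductive span_sub : predArgType := SpanSub (u : R^o) & u \in beta_span.
Definition span_val (x : span_sub) := let: SpanSub u _ := x in u.
HB.instance Definition _ := [isSub of span_sub for span_val].
HB.instance Definition _ := [Choice of span_sub by <:].
HB.instance Definition _ := [SubChoice_isSubZmodule of span_sub by <:].
HB.instance Definition _ := [SubZmodule_isSubLmodule of span_sub by <:].

Hypothesis beta_tensor : is_tensor_product beta.

Let beta_linl a m1 m2 n : beta (a *: m1 + m2) n = a * beta m1 n + beta m2 n.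
Proof. by case: beta_tensor => -[bl _] _; rewrite bl. Qed.

(* Factor beta
   through its span; the composite with the inclusion agrees with the identity
   on the values of beta, hence (by uniqueness) on 1. *)
Lemma one_in_beta_span :
  exists s : seq (R * M * N), 1 = \sum_(p <- s) p.1.1 * beta p.1.2 p.2.
Proof.
have [[bl br] univ] := beta_tensor.
have inS m n : beta m n \in beta_span.
  by apply/asboolP; exists [:: (1, m, n)]; rewrite big_seq1 /= mul1r.
pose phi m n : span_sub := SpanSub (inS m n).
have bphi : bilinear_map phi.
  by split=> *; apply: val_inj; rewrite /= ?bl ?br.
have [[h [hl hphi]] _] := univ _ phi bphi.
pose e : R := val (h 1).
have beta_e m n : beta m n = beta m n * e.
  by rewrite -[X in X = _]/(val (phi m n)) hphi (linear_map_regular hl).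
have [_ beta_uniq] := univ _ beta (conj bl br).
have e1 : (1 : R^o) = e.
  rewrite -[RHS]mul1r.
  apply: (beta_uniq id (fun r : R^o => (r * e : R^o))).
  - by [].
  - by move=> a x y; rewrite /= mulrDl; congr (_ + _); exact: (esym (mulrA a x e)).
  - by [].
  - by move=> m n; rewrite -beta_e.
by move/asboolP: (valP (h 1)); rewrite -/e -e1.
Qed.

Lemma beta_transport (x : M) :
  exists w : M, forall m n, beta x n *: m = beta m n *: w.
Proof.
have [[bl br] univ] := beta_tensor.
pose phi (m : M) (n : N) : M := beta x n *: m.
have bphi : bilinear_map phi.
  split.
  - by move=> a m1 m2 n; rewrite /phi scalerDr !scalerA mulrC.
  - by move=> a m n1 n2; rewrite /phi br scalerDl scalerA.
have [[h [hl hphi]] _] := univ _ phi bphi.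
by exists (h 1) => m n; rewrite -(linear_map_regular hl) -hphi.
Qed.

Lemma beta_conductor (S : {pred M}) : submod_closed S ->
  forall x, x \in S -> forall (n : N) (y : M), beta x n *: y \in S.
Proof.
move=> SC x xS n y.
have [[S0 SD] SZ] := GRing.submod_closed_semi SC.
have [s E] := one_in_beta_span.
have /choice [w hw] := beta_transport.
have -> : y = \sum_(p <- s) (p.1.1 * beta y p.2) *: w p.1.2.
  rewrite -{1}[y]scale1r E scaler_suml; apply: eq_bigr => p _.
  by rewrite -!scalerA hw.
rewrite scaler_sumr; elim: s {E} => [|p s IH]; first by rewrite big_nil.
rewrite big_cons; apply: SD => //.
by rewrite !scalerA mulrC -scalerA -hw; apply: (SZ); apply: (SZ).
Qed.

Definition escapes (x : M) (m : set R) : Prop := exists n, ~ m (beta x n).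

Lemma escapes_extend (J : eqType) (s : seq J) (mm : J -> set R) (m : set R) (x : M) :
  maximal_ideal m -> {in s, forall j, maximal_ideal (mm j) /\ escapes x (mm j)} ->
  exists x', escapes x' m /\ {in s, forall j, escapes x' (mm j)}.
Proof.
move=> mmax xs.
have [[m0 mD mM] _ _] := mmax.
have [xm|xnm] := pselect (escapes x m).
  by exists x; split=> // j /xs[].
have beta_x_m n : m (beta x n) by apply: contrapT => nm; apply: xnm; exists n.
have [p pm] : exists p : R * M * N, ~ m (beta p.1.2 p.2).
  have [s1 E] := one_in_beta_span.
  apply: contrapT => hp; case: mmax => _ []; rewrite E; apply: ideal_sum => // q.
  by apply: mM; apply: contrapT => nq; apply: hp; exists q.
have [e ne eI] : exists2 e, ~ m e & {in s, forall j, mm j e}.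
  apply: avoid_maximal_ideal => // j /xs[mjmax [n xn]].
  split; first by case: mjmax.
  apply: contrapT => sub; apply: xn.
  apply: (maximal_ideal_sub mjmax mmax) => [z mjz|]; last exact: beta_x_m.
  by apply: contrapT => nz; apply: sub; exists z.
have beta_new n : beta (x + e *: p.1.2) n = e * beta p.1.2 n + beta x n.
  by rewrite addrC beta_linl.
exists (x + e *: p.1.2); split.
  exists p.2; rewrite beta_new => hm.
  apply: (maximal_ideal_prime mmax ne pm).
  by rewrite -(addrK (beta x p.2) (e * _)); apply: idealB.
move=> j js; have [[iI _ _] [n xn]] := xs j js.
exists n; rewrite beta_new => hm; apply: xn.
rewrite -(addKr (e * beta p.1.2 n) (beta x n)) addrC; apply: idealB => //.
by case: iI => _ _ IM; rewrite mulrC; apply: IM; apply: eI.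
Qed.

Lemma escapes_all (J : eqType) (s : seq J) (mm : J -> set R) :
  {in s, forall j, maximal_ideal (mm j)} ->
  exists x, {in s, forall j, escapes x (mm j)}.
Proof.
elim: s => [|j s IH] smax; first by exists 0.
have [x xs] : exists x, {in s, forall i, escapes x (mm i)}.
  by apply: IH => i si; apply: smax; rewrite inE si orbT.
have [|x' [x'j x's]] := @escapes_extend _ s mm (mm j) x (smax j (mem_head j s)).
  by move=> i si; split; [apply: smax; rewrite inE si orbT | apply: xs].
by exists x' => i; rewrite inE => /predU1P[->|/x's].
Qed.

End Tensor.

Lemma invertible_has_avoidance (R : comNzRingType) (M : lmodType R) :
  invertible_module M -> has_avoidance M.
Proof.
move=> [N [beta tb]] n Mk SC cover; apply: contrapT => nall.
pose C k : set R := fun r => forall y : M, r *: y \in Mk k.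
have C_ideal k : ideal (C k).
  have [[S0 SD] SZ] := GRing.submod_closed_semi (SC k).
  split.
  - by move=> y; rewrite scale0r.
  - by move=> x y Cx Cy z; rewrite scalerDl; apply: SD.
  - by move=> r x Cx z; rewrite -scalerA; apply: SZ.
have C_proper k : ~ C k 1.
  by move=> C1; apply: nall; exists k => y; have := C1 y; rewrite scale1r.
have /choice [mm mmP] k : exists m, maximal_ideal m /\ C k `<=` m.
  by have [m ? ?] := maximal_ideal_exists (C_ideal k) (C_proper k); exists m.
have [x xesc] := @escapes_all _ _ _ beta tb _ (enum 'I_n) mm (fun k _ => (mmP k).1).
have [k xk] := cover x.
have [n' xn'] := xesc k (mem_enum _ k).
by apply: xn'; apply: (mmP k).2 => y; exact: beta_conductor.
Qed.

Theorem corollary3p3 (R T : comNzRingType) (iota : {rmorphism R -> T}) :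
  is_total_ring_of_fractions iota ->
  trivial_Picard_group T ->
  forall M : lmodType R, invertible_module M -> has_avoidance M.
Proof. by move=> _ _ M; exact: invertible_has_avoidance. Qed.
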